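(* The measure space $(\mathbb{R}^{\mathbb{N}},\mu)$ is not localizable.
   Context: Let $\mathcal{B}$ be the Borel $\sigma$-algebra of $\mathbb{R}$, $\lambda$ the Lebesgue measure, and $\mathcal{B}_{\infty}$ the $\sigma$-algebra on $\mathbb{R}^{\mathbb{N}}$ generated by the cylinder sets $\prod_{i=1}^{m}C_{i}\times\prod_{i=m+1}^{\infty}\mathbb{R}$ with $C_i\in\mathcal{B}$, $m\in\mathbb{N}$. Let $\mathcal{F}(\mathcal{B},\lambda)$ be the set of finite rectangles $\prod_{i\in\mathbb{N}}C_{i}$ with $C_i\in\mathcal{B}$ and $\prod_{i}\lambda(C_i)\in[0,\infty)$, with $\mathrm{vol}(\prod_{i}C_i):=\prod_i\lambda(C_i)$. The measure $\mu$ is the restriction to $\mathcal{B}_{\infty}$ of the outer measure $\mu^{\ast}(A):=\inf\{\sum_{n}\mathrm{vol}(\mathscr{C}_{n}) : \mathscr{C}_{n}\in\mathcal{F}(\mathcal{B},\lambda),\ A\subset\bigcup_{n}\mathscr{C}_{n}\}$ ($\inf\varnothing=\infty$). A measure space $(X,\Sigma,\nu)$ is localizable if $\nu$ is semi-finite and every $\mathcal{E}\subset\Sigma$ admits an essential supremum, i.e., some $H_{\mathcal{E}}\in\Sigma$ with $\nu(E\setminus H_{\mathcal{E}})=0$ for all $E\in\mathcal{E}$, and such that whenever $G\in\Sigma$ satisfies $\nu(E\setminus G)=0$ for all $E\in\mathcal{E}$, then $\nu(H_{\mathcal{E}}\setminus G)=0$. *)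

From HB Require Import structures.
From mathcomp Require Import all_boot all_order all_algebra.
From mathcomp Require Import all_classical all_reals all_analysis.
Set Implicit Arguments. Unset Strict Implicit. Unset Printing Implicit Defensive.
Import Order.TTheory GRing.Theory Num.Theory.
Local Open Scope classical_set_scope.
Local Open Scope ring_scope.
Local Open Scope ereal_scope.

Section Defs.
Variable R : realType.

Definition borel (C : set R) : Prop := @measurable _ (measurableTypeR R) C.
Definition lam (C : set R) : \bar R := @lebesgue_measure R C.

Definition cylinders : set (set (nat -> R)) :=
  [set A | exists (m : nat) (C : nat -> set R),
      (forall i, borel (C i)) /\
      A = [set x | forall i, (i < m)%N -> C i (x i)]].

Definition B_infty : set (set (nat -> R)) := <<s cylinders >>.

Definition rect (C : nat -> set R) : set (nat -> R) :=
  [set x | forall i, C i (x i)].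

Definition partial_vol (C : nat -> set R) (n : nat) : \bar R :=
  \prod_(i < n) lam (C i).

Definition finite_rect (C : nat -> set R) : Prop :=
  (forall i, borel (C i)) /\
  exists v : R, partial_vol C @ \oo --> v%:E.

Definition vol (C : nat -> set R) : \bar R := lim (partial_vol C @ \oo).

(* outer measure mu^* (inf of empty set = +oo via ereal_inf) *)
Definition mu_star (A : set (nat -> R)) : \bar R :=
  ereal_inf [set s | exists Cs : nat -> nat -> set R,
      (forall n, finite_rect (Cs n)) /\
      A `<=` \bigcup_n rect (Cs n) /\
      s = \sum_(0 <= n <oo) vol (Cs n)].

End Defs.

Section Localizable.
Variables (R : realType) (X : Type) (Sigma : set (set X)) (nu : set X -> \bar R).

Definition semifinite_ms : Prop :=
  forall E, Sigma E -> nu E = +oo ->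
    exists F, [/\ Sigma F, F `<=` E & 0 < nu F < +oo].

Definition is_ess_sup (Ecal : set (set X)) (H : set X) : Prop :=
  [/\ Sigma H,
      (forall E, Ecal E -> nu (E `\` H) = 0) &
      (forall G, Sigma G -> (forall E, Ecal E -> nu (E `\` G) = 0) ->
         nu (H `\` G) = 0)].

Definition localizable : Prop :=
  semifinite_ms /\
  forall Ecal : set (set X), Ecal `<=` Sigma -> exists H, is_ess_sup Ecal H.
End Localizable.

From mathcomp Require Import all_boot all_order all_algebra.
From mathcomp Require Import all_classical all_reals all_analysis.
From mathcomp Require Import lra.
Set Implicit Arguments. Unset Strict Implicit. Unset Printing Implicit Defensive.
Import Order.TTheory GRing.Theory Num.Theory numFieldNormedType.Exports.
Local Open Scope classical_set_scope.
Local Open Scope ring_scope.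
Local Open Scope ereal_scope.

(* Let E be the rectangle whose even sides are [0, 1/(i+1)] and whose odd
   sides are all of R.  It is B_infty-measurable and mu E = +oo: given
   countably many finite rectangles, choose a point of E whose j-th coordinate
   avoids every null j-th side and, for odd j = 2n+1, the (finite) j-th side of
   the n-th rectangle; that point lies in none of them.  Yet every subset of E
   of finite outer measure is null: the side measures of a finite rectangle of
   positive volume tend to 1, so intersecting it with E at a large even
   coordinate i shrinks its volume by a factor at most 2/(i+1).  Hence mu is
   not semi-finite. *)

Section ereal_products.
Variable R : realDomainType.
Implicit Types a : nat -> \bar R.

Lemma prode_gt0 (I : Type) (s : seq I) (P : pred I) (f : I -> \bar R) :
  (forall i, P i -> 0 < f i) -> 0 < \prod_(i <- s | P i) f i.
Proof.
by move=> f_gt0; apply: (big_ind (fun x => 0 < x)) => //; exact: mule_gt0.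
Qed.

Lemma prode_eq0 a i k : (i < k)%N -> a i = 0 -> \prod_(j < k) a j = 0.
Proof. by move=> ik ai0; rewrite (bigD1 (Ordinal ik)) //= ai0 mul0e. Qed.

Lemma prode_eq_pinfty a i k : (forall j, 0 < a j) -> (i < k)%N -> a i = +oo ->
  \prod_(j < k) a j = +oo.
Proof.
by move=> a_gt0 ik aioo; rewrite (bigD1 (Ordinal ik)) //= aioo gt0_mulye // prode_gt0.
Qed.

End ereal_products.

Section measure_facts.
Context d (T : measurableType d) (R : realType) (mu : {measure set T -> \bar R}).

Lemma measure_lt_setD_neq0 (A B : set T) : measurable A -> measurable B ->
  mu A < mu B -> B `\` A !=set0.
Proof.
move=> mA mB AB; apply/set0P/negP => /eqP; rewrite setD_eq0 => BA.
by move: AB; rewrite ltNge le_measure ?inE.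
Qed.

Lemma measure_bigcup_eq0 (F : (set T)^nat) : (forall k, measurable (F k)) ->
  (forall k, mu (F k) = 0) -> mu (\bigcup_k F k) = 0.
Proof.
move=> mF F0; apply/negligibleP; first exact: bigcupT_measurable.
by apply: (@negligible_bigcup _ _ _ mu) => k; apply/negligibleP; [exact: mF|exact: F0].
Qed.

End measure_facts.

Section factor_limit.
Variable R : numFieldType.

Lemma cvg_factor_of_cvg_prod (c : nat -> R) (v : R) :
  (forall k, c k != 0)%R -> (v != 0)%R ->
  (\prod_(j < k) c j)%R @[k --> \oo] --> v -> c k @[k --> \oo] --> (1 : R)%R.
Proof.
move=> c_neq0 v_neq0 cv; pose p k := (\prod_(j < k) c j)%R.
have -> : c = fun k => (p k.+1 * (p k)^-1)%R.
  apply/funext => k; rewrite /p big_ord_recr /= mulrAC mulfV ?mul1r //.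
  by apply/prodf_neq0 => j _.
have p_shift : p k.+1 @[k --> \oo] --> v by rewrite (cvg_shiftS p).
by have := cvgM p_shift (cvgV v_neq0 cv); rewrite mulfV //; apply.
Qed.

End factor_limit.

Section product_rectangles.
Context {R : realType}.
Implicit Types (C : nat -> set R) (A : set R).

Definition update_side C i A : nat -> set R := fun j => if j == i then A else C j.

Lemma B_infty_rect C : (forall i, borel (C i)) -> B_infty (rect C).
Proof.
move=> C_borel.
have -> : rect C = \bigcap_i [set x | C i (x i)].
  by apply/seteqP; split=> x hx i => [_|]; exact: hx.
(* [B_infty] is, by definition, measurability in [g_sigma_algebraType cylinders]. *)
apply: (@bigcapT_measurable _ (g_sigma_algebraType (@cylinders R))) => i.
suff : @cylinders R [set x | C i (x i)] by exact: sub_sigma_algebra.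
exists i.+1, (update_side (fun=> setT) i (C i)); split.
  by move=> j; rewrite /update_side; case: eqP => _; [exact: C_borel|exact: measurableT].
apply/seteqP; split=> x /=.
  by move=> Cx j _; rewrite /update_side; case: eqP => // ->.
by move=> /(_ i (ltnSn i)); rewrite /update_side eqxx.
Qed.

Definition thin_side i : set R := if odd i then setT else `[0%R, i.+1%:R^-1%R]%classic.

Definition thin_set : set (nat -> R) := rect thin_side.

Lemma borel_thin_side i : borel (thin_side i).
Proof.
by rewrite /thin_side; case: ifP => _; [exact: measurableT|exact: measurable_itv].
Qed.

Lemma lam_thin_side i : lam (thin_side i) = if odd i then +oo else (i.+1%:R^-1)%:E.
Proof.
rewrite /thin_side /lam; case: ifP => _.
  by rewrite -set_itvNyy lebesgue_measure_itv.
by rewrite lebesgue_measure_itv /= lte_fin invr_gt0 ltr0Sn oppr0 adde0.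
Qed.

Lemma lam_thin_side_gt0 i : 0 < lam (thin_side i).
Proof.
by rewrite lam_thin_side; case: ifP => _; rewrite ?ltey // lte_fin invr_gt0 ltr0Sn.
Qed.

Lemma B_infty_thin_set : B_infty thin_set.
Proof. exact: B_infty_rect borel_thin_side. Qed.

Lemma finite_rect_volE C : finite_rect C ->
  exists2 v : R, partial_vol C @ \oo --> v%:E & vol C = v%:E.
Proof. by move=> [_ [v cv]]; exists v => //; exact: cvg_lim. Qed.

Lemma finite_rect_vol_ge0 C : finite_rect C -> 0 <= vol C.
Proof.
move=> [_ [v cv]]; apply: lime_ge; first by apply/cvg_ex; exists v%:E.
by apply: nearW => k; apply: prode_ge0 => j _; exact: measure_ge0.
Qed.

Lemma vol_null_side C i : lam (C i) = 0 -> vol C = 0.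
Proof.
move=> Ci0; apply: lim_near_cst => //; exists i.+1 => // k /= ik.
exact: (prode_eq0 (a := fun j => lam (C j)) ik).
Qed.

Lemma finite_rect_sides C : finite_rect C ->
  (exists i, lam (C i) = 0) \/ (forall i, 0 < lam (C i) < +oo).
Proof.
move=> fC; have [v _ volC] := finite_rect_volE fC.
have [|no_null] := pselect (exists i, lam (C i) = 0); [by left|right].
have C_gt0 i : 0 < lam (C i).
  by rewrite lt0e measure_ge0 andbT; apply/eqP => Ci0; apply: no_null; exists i.
move=> i; rewrite C_gt0 ltey /=; apply/eqP => Cioo.
suff : vol C = +oo by rewrite volC.
apply: lim_near_cst => //; exists i.+1 => // k /= ik.
exact: (prode_eq_pinfty (a := fun j => lam (C j)) C_gt0 ik).
Qed.

Lemma rect_not_covered (S : nat -> set R) (Cs : nat -> nat -> set R) :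
  (forall j, borel (S j)) -> (forall j, 0 < lam (S j)) ->
  (forall n, lam (S n.*2.+1) = +oo) ->
  (forall n, finite_rect (Cs n)) -> ~ rect S `<=` \bigcup_n rect (Cs n).
Proof.
move=> S_borel S_gt0 S_oo fCs cover.
have Cs_borel n j : borel (Cs n j) by have [] := fCs n.
pose null_sides j := \bigcup_n (if lam (Cs n j) == 0 then Cs n j else set0).
pose diag j := if odd j && (lam (Cs j./2 j) < +oo) then Cs j./2 j else set0.
have null_side_borel n j : borel (if lam (Cs n j) == 0 then Cs n j else set0).
  by case: ifP => _; [exact: Cs_borel|exact: measurable0].
have null_borel j : borel (null_sides j).
  by apply: bigcupT_measurable => n; exact: null_side_borel.
have diag_borel j : borel (diag j).
  by rewrite /diag; case: ifP => _; [exact: Cs_borel|exact: measurable0].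
have lam_null j : lam (null_sides j) = 0.
  apply: measure_bigcup_eq0 => [n|n]; first exact: null_side_borel.
  by case: ifPn => [/eqP|_]; last exact: measure0.
have lam_excluded j : lam (null_sides j `|` diag j) = lam (diag j).
  by rewrite setUC [LHS]measureU0 //;
    [exact: diag_borel|exact: null_borel|exact: lam_null].
have avoid j : exists y, S j y /\ ~ (null_sides j `|` diag j) y.
  apply: (measure_lt_setD_neq0 (mu := lebesgue_measure)).
  - exact: measurableU (null_borel j) (diag_borel j).
  - exact: S_borel.
  change (lam (null_sides j `|` diag j) < lam (S j)); rewrite lam_excluded /diag.
  case: ifP => [/andP[odd_j diag_fin]|_]; last by rewrite /lam measure0 S_gt0.
  by rewrite -[j in S j](odd_double_half j) odd_j add1n S_oo.
have [x Sx_avoid] := choice avoid.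
have /cover [n _ Cn_x] : rect S x by move=> j; have [] := Sx_avoid j.
have [[j Cnj0]|Cn_fin] := finite_rect_sides (fCs n).
  have [_] := Sx_avoid j; apply; left; exists n => //; rewrite Cnj0 eqxx; exact: Cn_x.
have [_] := Sx_avoid n.*2.+1; apply; right.
rewrite /diag /= odd_double uphalf_double /=; have /andP[_ ->] := Cn_fin n.*2.+1.
exact: Cn_x.
Qed.

Lemma mu_star_thin_set : mu_star (thin_set : set (nat -> R)) = +oo.
Proof.
rewrite /mu_star -ereal_inf0; congr ereal_inf.
apply/seteqP; split=> s // [Cs [fCs [cover _]]].
apply: rect_not_covered fCs cover; [exact: borel_thin_side|exact: lam_thin_side_gt0|].
by move=> n; rewrite lam_thin_side /= odd_double.
Qed.

Lemma vol_update_side C i A (c a : R) : finite_rect C -> borel A ->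
  lam (C i) = c%:E -> (0 < c)%R -> lam A = a%:E ->
  finite_rect (update_side C i A) /\ vol (update_side C i A) = vol C * (a / c)%:E.
Proof.
move=> fC A_borel Ci c_gt0 lamA; have [v cv volC] := finite_rect_volE fC.
have pvol_update k : (i < k)%N ->
    partial_vol (update_side C i A) k = partial_vol C k * (a / c)%:E.
  move=> ik; rewrite /partial_vol [LHS](bigD1 (Ordinal ik)) //.
  rewrite [in RHS](bigD1 (Ordinal ik)) //= /update_side eqxx lamA Ci.
  rewrite muleAC -EFinM mulrC divfK ?gt_eqF //; congr (_ * _).
  by apply: eq_bigr => j ji; rewrite ifN.
have cv_update : partial_vol (update_side C i A) @ \oo --> (v * (a / c))%:E.
  have r_fin : (a / c)%:E \is a fin_num by [].
  rewrite EFinM; apply: cvg_trans (cvgeZr r_fin cv); apply: near_eq_cvg.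
  by exists i.+1 => // k /= ik; rewrite pvol_update.
split; last by rewrite volC -EFinM; exact: cvg_lim cv_update.
split; last by exists (v * (a / c))%R.
by move=> j; rewrite /update_side; case: eqP => _ //; case: fC.
Qed.

Lemma cut_even_side_vol_le C i (v c : R) : finite_rect C -> vol C = v%:E ->
  lam (C i) = c%:E -> (1 / 2 < c)%R -> ~~ odd i ->
  exists C', [/\ finite_rect C', thin_set `&` rect C `<=` rect C'
               & vol C' <= (2 * v / i.+1%:R)%:E].
Proof.
move=> fC volC Ci c_gt_half even_i.
have c_gt0 : (0 < c)%R by lra.
pose A := C i `&` thin_side i.
have A_borel : borel A.
  by apply: measurableI; [exact: (proj1 fC i)|exact: borel_thin_side].
have lamA_le : lam A <= (i.+1%:R^-1)%:E.
  have := lam_thin_side i; rewrite (negbTE even_i) => <-.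
  apply: (le_measure lebesgue_measure (mem_set A_borel) (mem_set (borel_thin_side i))).
  exact: subIsetr.
have [a lamA] : exists a, lam A = a%:E.
  exists (fine (lam A)); rewrite fineK // ge0_fin_numE ?measure_ge0 //.
  exact: le_lt_trans lamA_le (ltey _).
have [fC' volC'] := vol_update_side fC A_borel Ci c_gt0 lamA.
exists (update_side C i A); split => //.
  move=> x [thin_x Cx] j; rewrite /update_side.
  by case: eqP => [->|_]; [split; [exact: Cx|exact: thin_x]|exact: Cx].
have a_ge0 : (0 <= a)%R by rewrite -lee_fin -lamA measure_ge0.
have a_le : (a <= i.+1%:R^-1)%R by rewrite -lee_fin -lamA.
have v_ge0 : (0 <= v)%R by rewrite -lee_fin -volC finite_rect_vol_ge0.
set t := (i.+1%:R^-1)%R in a_le *.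
have ac_le : (a / c <= 2 * t)%R.
  have : (0 <= t * (2 * c - 1))%R by rewrite mulr_ge0 //; lra.
  rewrite ler_pdivrMr //; nra.
rewrite volC' volC -EFinM lee_fin; apply: le_trans (ler_wpM2l v_ge0 ac_le) _.
by rewrite mulrCA mulrA.
Qed.

Lemma thin_set_rect_vol_small C e : finite_rect C -> (0 < e)%R ->
  exists C', [/\ finite_rect C', thin_set `&` rect C `<=` rect C' & vol C' <= e%:E].
Proof.
move=> fC e_gt0; have [v cv volC] := finite_rect_volE fC.
have [v0|v_neq0] := eqVneq v 0%R.
  by exists C; split=> //; rewrite volC v0 lee_fin ltW.
have [[i Ci0]|C_fin] := finite_rect_sides fC.
  by move: (vol_null_side Ci0); rewrite volC => -[v0]; rewrite v0 eqxx in v_neq0.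
pose c j := fine (lam (C j)).
have Cc j : lam (C j) = (c j)%:E.
  by rewrite fineK // ge0_fin_numE ?measure_ge0 //; case/andP: (C_fin j).
have c_gt0 j : (0 < c j)%R by rewrite -lte_fin -Cc; case/andP: (C_fin j).
have c_cvg1 : c k @[k --> \oo] --> (1 : R)%R.
  have pvolE : partial_vol C = fun k => (\prod_(j < k) c j)%:E.
    by apply/funext => k; rewrite /partial_vol -prodEFin; apply: eq_bigr => j _.
  apply: cvg_factor_of_cvg_prod v_neq0 _ => [k|]; first by rewrite gt_eqF.
  by move: cv; rewrite pvolE => /fine_cvg.
have [N _ large_N] : \forall k \near \oo, (1 / 2 < c k)%R /\ (2 * v / e < k%:R)%R.
  near=> k; split; near: k; last exact: nbhs_infty_gtr.
  by apply: (cvgr_gt _ c_cvg1); lra.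
have [c_gt_half i_large] : (1 / 2 < c N.*2)%R /\ (2 * v / e < N.*2%:R)%R.
  by apply: large_N; rewrite /= -addnn leq_addl.
have [C' [fC' thin_sub volC'_le]] :=
  cut_even_side_vol_le fC volC (Cc N.*2) c_gt_half (negbT (odd_double N)).
exists C'; split=> //; apply: le_trans volC'_le _.
rewrite lee_fin ler_pdivrMr // -natr1; rewrite ltr_pdivrMr // in i_large; nra.
Unshelve. all: by end_near.
Qed.

Lemma mu_star_ge0 (F : set (nat -> R)) : 0 <= mu_star F.
Proof.
apply: le_ereal_inf_tmp => s [Cs [fCs [_ ->]]].
by apply: nneseries_ge0 => n _ _; exact: finite_rect_vol_ge0.
Qed.

Lemma mu_star_thin_subset (F : set (nat -> R)) :
  F `<=` thin_set -> mu_star F < +oo -> mu_star F = 0.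
Proof.
move=> F_thin; rewrite /mu_star; set covers := [set s | _] => F_fin.
have [_ [Cs [fCs [cover _]]]] : covers !=set0.
  by apply/set0P; apply: contraTneq F_fin => ->; rewrite ereal_inf0 ltxx.
apply/eqP; rewrite eq_le mu_star_ge0 andbT; apply/lee_addgt0Pr => e e_gt0.
have eps_gt0 n : (0 < e / (2 ^ n.+1)%:R)%R by rewrite divr_gt0 // ltr0n expn_gt0.
have [Cs' hCs'] := choice (fun n => thin_set_rect_vol_small (fCs n) (eps_gt0 n)).
rewrite add0e; apply: le_trans _ (epsilon_trick0 xpredT (ltW e_gt0)).
apply: (@le_trans _ _ (\sum_(0 <= n <oo) vol (Cs' n))).
  apply: ereal_inf_lbound; exists Cs'; split; first by move=> n; have [] := hCs' n.
  split=> // x Fx; have [n _ Cs_x] := cover x Fx; exists n => //.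
  by have [_ sub _] := hCs' n; apply: sub; split; [exact: F_thin|].
apply: lee_nneseries => [n _ _|n _]; have [fC' _ vol_le] := hCs' n => //.
exact: finite_rect_vol_ge0.
Qed.

Lemma not_semifinite_mu_star : ~ semifinite_ms (@B_infty R) (@mu_star R).
Proof.
move=> sf.
have [F [_ F_thin /andP[F_gt0 F_fin]]] := sf _ B_infty_thin_set mu_star_thin_set.
by move: F_gt0; rewrite mu_star_thin_subset // ltxx.
Qed.

End product_rectangles.

Theorem theoremA1 (R : realType) :
  ~ localizable (@B_infty R) (@mu_star R).
Proof. by move=> [sf _]; exact: not_semifinite_mu_star sf. Qed.
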